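(* For every parameter budget $p\ge 0$, the set $A_p=\{A : A \text{ is a valid architecture and } \mathrm{numParams}(A)\le p\}$ is finite.
   Context: Fix an input $X\in\mathbb{R}^{H\times W\times C}$ with $H,W,C\in\mathbb{N}^+$ fixed. An architecture $A$ is a finite sequence of layers $l_1,\dots,l_N$ applied in order to the input. Each layer is of one of three kinds: (i) an activation function $\sigma$ drawn from a fixed finite set $\Sigma$ (e.g. sigmoid, ReLU, softmax), which has no parameters and does not change the spatial dimensions; (ii) a non-parametric pooling layer $q_s$ (e.g. max or average pooling) with stride $s$ and kernel size $k$, which has no parameters and, having no padding, reduces each spatial dimension of its input by at least one pixel; (iii) a parametric layer $f_\theta$ (convolution, batch normalization, fully connected), with parameter vector $\theta$ of size $|\theta|\in\mathbb{N}^+$, which does not increase spatial dimensions. For a given input shape there are only finitely many choices of pooling layer producing a valid (positive) output size, and for each $n$ only finitely many choices of parametric layer with $|\theta|\le n$. Standing assumption: if $l_i\in\Sigma$ then $l_{i+1}\notin\Sigma$ (no two consecutive activations). An architecture is valid if every intermediate spatial dimension is a positive integer. $\mathrm{numParams}(A)=\sum_i |\theta_i|$, summing over the parametric layers of $A$. *)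

From HB Require Import structures.
From mathcomp Require Import all_boot all_order all_algebra.
From mathcomp Require Import boolp classical_sets cardinality.
Set Implicit Arguments. Unset Strict Implicit. Unset Printing Implicit Defensive.
Import Order.TTheory GRing.Theory Num.Theory.

Local Open Scope ring_scope.

(* A tensor shape: (height, width, channels).  Spatial dimensions are integers
   so that non-positive (invalid) sizes can be represented. *)
Definition shape := (int * int * int)%type.
Definition sh_H (s : shape) : int := s.1.1.
Definition sh_W (s : shape) : int := s.1.2.

(* The layer vocabulary:
   - Act    : the fixed finite set Sigma of activation functions,
   - Pool   : the (descriptions of) non-parametric pooling layers
              (kind, stride s, kernel size k, ...), with output-shape map,
   - Par    : the (descriptions of) parametric layers, with output-shape map
              and parameter count |theta|. *)
Record NetSpec := {
  Act : finType;
  Pool : Type;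
  Par : Type;
  pool_out : Pool -> shape -> shape;
  par_out : Par -> shape -> shape;
  par_size : Par -> nat;
}.

Definition spec_ok (S : NetSpec) : Prop :=
  (* pooling (no padding) reduces each spatial dimension by at least one pixel *)
  (forall (q : Pool S) (s : shape),
      sh_H (pool_out q s) <= sh_H s - 1 /\ sh_W (pool_out q s) <= sh_W s - 1) /\
  (forall s : shape,
      finite_set [set q : Pool S | 0 < sh_H (pool_out q s) /\ 0 < sh_W (pool_out q s)]) /\
  (forall f : Par S, (0 < par_size f)%N) /\
  (forall (f : Par S) (s : shape),
      sh_H (par_out f s) <= sh_H s /\ sh_W (par_out f s) <= sh_W s) /\
  (forall n : nat, finite_set [set f : Par S | (par_size f <= n)%N]).

Inductive layer (S : NetSpec) : Type :=
  | LAct of Act S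
  | LPool of Pool S
  | LPar of Par S.

Definition arch (S : NetSpec) := seq (layer S).

Definition is_act (S : NetSpec) (l : layer S) : bool :=
  if l is LAct _ then true else false.

Fixpoint no_consec_act (S : NetSpec) (A : arch S) : bool :=
  match A with
  | l1 :: ((l2 :: _) as A') => ~~ (is_act l1 && is_act l2) && no_consec_act A'
  | _ => true
  end.

Definition layer_out (S : NetSpec) (l : layer S) (s : shape) : shape :=
  match l with
  | LAct _ => s
  | LPool q => pool_out q s
  | LPar f => par_out f s
  end.

Fixpoint valid_from (S : NetSpec) (s : shape) (A : arch S) : bool :=
  match A with
  | [::] => true
  | l :: A' =>
      let s' := layer_out l s in
      [&& 0 < sh_H s', 0 < sh_W s' & valid_from s' A']
  end.

Definition layer_params (S : NetSpec) (l : layer S) : nat :=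
  if l is LPar f then par_size f else 0%N.

Definition numParams (S : NetSpec) (A : arch S) : nat :=
  sumn (map (@layer_params S) A).

From Pilot Require Import Defs.
From HB Require Import structures.
From mathcomp Require Import all_boot all_order all_algebra.
From mathcomp Require Import boolp classical_sets cardinality.
From mathcomp Require Import zify.
Import Order.TTheory GRing.Theory Num.Theory.

Set Implicit Arguments.
Unset Strict Implicit.

(* Every pooling layer lowers the height by at least one and every parametric layer
   costs a parameter, while neither ever raises the height; since the height
   must stay positive, a valid network with at most p parameters has fewer
   than p + H non-activation layers, and as activations are never adjacent it
   has at most 2(p + H) layers.  Architectures of bounded length and budget
   are finitely many, because from any shape only finitely many first layers
   are valid within the budget. *)

Local Open Scope classical_set_scope.
Local Open Scope ring_scope.

Section NonAdjacent.
Variables (T : Type) (a : pred T).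

Let nand_rel (x y : T) := ~~ (a x && a y).

Lemma path_nand_count_le (x : T) (s : seq T) :
  path nand_rel x s -> (count a (x :: s) <= count (predC a) (x :: s) + a x)%N.
Proof.
elim: s x => [|y s IHs] x /=; first by case: (a x).
move=> /andP[nxy /IHs] /=; move: nxy; rewrite /nand_rel.
by case: (a x) (a y) => -[] /=; lia.
Qed.

Lemma size_sorted_nand_le (s : seq T) :
  sorted nand_rel s -> (size s <= (count (predC a) s).*2.+1)%N.
Proof.
case: s => [|x s] // /path_nand_count_le.
rewrite -(count_predC a (x :: s)) -addnn; have := leq_b1 (a x); lia.
Qed.

End NonAdjacent.

Section Architectures.
Variable S : NetSpec.

Lemma no_consec_actE (A : arch S) :
  no_consec_act A = sorted (fun l1 l2 => ~~ (is_act l1 && is_act l2)) A.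
Proof. by elim: A => [|l1 [|l2 A] IHA] //; move: IHA => /= ->. Qed.

Section HeightBudget.
Hypothesis pool_shrinks : forall (q : Pool S) s, sh_H (pool_out q s) <= sh_H s - 1.
Hypothesis par_no_grow : forall (f : Par S) s, sh_H (par_out f s) <= sh_H s.
Hypothesis par_size_gt0 : forall f : Par S, (0 < par_size f)%N.

Lemma count_nonact_lt (s : Defs.shape) (A : arch S) :
  0 < sh_H s -> valid_from s A ->
  (count (predC (@is_act S)) A)%:Z < (numParams A)%:Z + sh_H s.
Proof.
elim: A s => [|l A IHA] s Hs /=; first by lia.
move=> /and3P[Hs' _ /(IHA _ Hs')]; rewrite /numParams /=.
case: l Hs' => [x|q|f] /= _.
- by lia.
- by have := pool_shrinks q s; lia.
- by have := par_no_grow f s; have := par_size_gt0 f; lia.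
Qed.

End HeightBudget.

Section Enumeration.
Hypothesis pool_finite : forall s : Defs.shape,
  finite_set [set q : Pool S | 0 < sh_H (pool_out q s) /\ 0 < sh_W (pool_out q s)].
Hypothesis par_finite : forall n : nat,
  finite_set [set f : Par S | (par_size f <= n)%N].

Definition bounded_archs (n : nat) (s : Defs.shape) (b : nat) : set (arch S) :=
  [set A | valid_from s A /\ (numParams A <= b)%N /\ (size A <= n)%N].

Lemma finite_first_layers (s : Defs.shape) (b : nat) :
  finite_set [set l : layer S | valid_from s [:: l] /\ (layer_params l <= b)%N].
Proof.
apply: (sub_finite_set (B := range (@LAct S)
  `|` @LPool S @` [set q | 0 < sh_H (pool_out q s) /\ 0 < sh_W (pool_out q s)]
  `|` @LPar S @` [set f | (par_size f <= b)%N])).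
  move=> [x|q|f] [/= /and3P[Hh Hw _] Hb]; first by left; left; exists x.
    by left; right; exists q.
  by right; exists f.
rewrite !finite_setU; split; [split|].
- exact/finite_image/finite_finset.
- exact/finite_image/pool_finite.
- exact/finite_image/par_finite.
Qed.

Lemma bounded_archsS (n : nat) (s : Defs.shape) (b : nat) :
  bounded_archs n.+1 s b `<=` [set [::]]
    `|` \bigcup_(l in [set l | valid_from s [:: l] /\ (layer_params l <= b)%N])
          cons l @` bounded_archs n (layer_out l s) (b - layer_params l)%N.
Proof.
move=> [|l A] [/= Hv [Hb Hn]]; first by left.
move: Hv Hb; rewrite /numParams /= => /and3P[Hh Hw Hv] Hb.
right; exists l; first by rewrite /= Hh Hw; split => //; lia.
by exists A => //; split => //; split; rewrite /numParams; lia.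
Qed.

Lemma finite_bounded_archs (n : nat) (s : Defs.shape) (b : nat) :
  finite_set (bounded_archs n s b).
Proof.
elim: n s b => [|n IHn] s b.
  apply: (sub_finite_set (B := [set [::]])); last exact: finite_set1.
  by move=> [|l A] [_ [_ Hn]].
apply: (sub_finite_set (@bounded_archsS n s b)).
rewrite finite_setU; split; first exact: finite_set1.
apply: bigcup_finite; first exact: finite_first_layers.
by move=> l _; apply: finite_image.
Qed.

End Enumeration.

End Architectures.

Theorem theorem1 (S : NetSpec) (hS : spec_ok S) (H W C : nat)
    (hH : (0 < H)%N) (hW : (0 < W)%N) (hC : (0 < C)%N) (p : nat) :
  finite_set [set A : arch S |
                no_consec_act A
                /\ valid_from ((Posz H, Posz W), Posz C) A
                /\ (numParams A <= p)%N].
Proof.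
have [pool_shrinks [pool_finite [par_size_gt0 [par_no_grow par_finite]]]] := hS.
set s := ((Posz H, Posz W), Posz C).
apply: (sub_finite_set _
  (finite_bounded_archs pool_finite par_finite (2 * (p + H))%N s p)).
move=> A [Hc [Hv Hp]]; split=> //; split=> //.
have Hs : 0 < sh_H s by rewrite /sh_H /=; lia.
have := count_nonact_lt (fun q s => (pool_shrinks q s).1)
  (fun f s => (par_no_grow f s).1) par_size_gt0 Hs Hv.
rewrite no_consec_actE in Hc; have := size_sorted_nand_le Hc.
rewrite /sh_H /=; lia.
Qed.
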